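(* Let $n \in \mathbb N$ and $F\colon\mathbb R_+^n\to \mathbb R_+$. If $F$ is amenable, monotone and quasi-subadditive with a constant $s \geqslant 1$, then $F$ is $(n)$-b-metric preserving, i.e. $F\in P^n_B$.
   Context: $\mathbb R_+=[0,\infty)$. For $\mathbf a,\mathbf b\in\mathbb R_+^n$, $\mathbf a\preceq\mathbf b$ means $a_i\leqslant b_i$ for all $i$, and $\mathbf a+\mathbf b$ is the coordinatewise sum. $F$ is amenable if $F(\mathbf x)=0\iff\mathbf x=(0,\dots,0)$; monotone if $F(\mathbf a)\leqslant F(\mathbf b)$ whenever $\mathbf a\preceq\mathbf b$; quasi-subadditive with constant $s\geqslant1$ if $F(\mathbf a+\mathbf b)\leqslant s(F(\mathbf a)+F(\mathbf b))$ for all $\mathbf a,\mathbf b\in\mathbb R_+^n$. A b-metric on $X$ is $d\colon X^2\to\mathbb R_+$ with $d(x,y)=0\iff x=y$, $d(x,y)=d(y,x)$, and for some $K\geqslant1$, $d(x,z)\leqslant K(d(x,y)+d(y,z))$ for all $x,y,z$. $P^n_B$ is the set of $F$ such that for every collection of b-metric spaces $(X_i,d_i)$, $i=1,\dots,n$ (arbitrary constants), the function $D(\mathbf x,\mathbf y)=F(d_1(x_1,y_1),\dots,d_n(x_n,y_n))$ on $\prod_{i=1}^nX_i$ is a b-metric. *)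

From Stdlib Require Import Reals.
From mathcomp Require Import ssreflect ssrbool eqtype ssrnat fintype.
Set Implicit Arguments.
Unset Strict Implicit.
Open Scope R_scope.

Definition nonneg_vec (n : nat) (a : 'I_n -> R) : Prop := forall i, 0 <= a i.

Definition maps_into_Rplus (n : nat) (F : ('I_n -> R) -> R) : Prop :=
  forall a, nonneg_vec a -> 0 <= F a.

Definition amenable (n : nat) (F : ('I_n -> R) -> R) : Prop :=
  forall a, nonneg_vec a -> (F a = 0 <-> forall i, a i = 0).

Definition monotone (n : nat) (F : ('I_n -> R) -> R) : Prop :=
  forall a b, nonneg_vec a -> nonneg_vec b ->
    (forall i, a i <= b i) -> F a <= F b.

Definition quasi_subadditive (n : nat) (F : ('I_n -> R) -> R) (s : R) : Prop :=
  1 <= s /\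
  forall a b, nonneg_vec a -> nonneg_vec b ->
    F (fun i => a i + b i) <= s * (F a + F b).

Definition is_bmetric (X : Type) (d : X -> X -> R) : Prop :=
  (forall x y, 0 <= d x y) /\
  (forall x y, d x y = 0 <-> x = y) /\
  (forall x y, d x y = d y x) /\
  (exists K, 1 <= K /\ forall x y z, d x z <= K * (d x y + d y z)).

Definition PnB (n : nat) (F : ('I_n -> R) -> R) : Prop :=
  forall (X : 'I_n -> Type) (d : forall i, X i -> X i -> R),
    (forall i, is_bmetric (d i)) ->
    is_bmetric (fun x y : (forall i, X i) => F (fun i => d i (x i) (y i))).

(* Quasi-subadditivity bounds F on integer multiples of a vector, F(m u) <= c_m F(u), and by
   monotonicity on any nonnegative multiple.  Taking for K the largest of the finitely many
   constants of the factors, d(x,z) <= K (d(x,y) + d(y,z)) coordinatewise, hence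
   F(d(x,z)) <= F(K d(x,y) + K d(y,z)) <= s c_K (F(d(x,y)) + F(d(y,z))).  The other b-metric
   axioms are inherited coordinatewise, the separation axiom through amenability. *)
From Stdlib Require Import Reals Lra FunctionalExtensionality.
From mathcomp Require Import ssreflect ssrbool eqtype ssrnat seq fintype.
Set Implicit Arguments.
Unset Strict Implicit.
Open Scope R_scope.

Definition bmetric_const (X : Type) (d : X -> X -> R) (K : R) : Prop :=
  1 <= K /\ forall x y z, d x z <= K * (d x y + d y z).

Lemma bmetric_const_le (X : Type) (d : X -> X -> R) (K K' : R) :
  (forall x y, 0 <= d x y) -> bmetric_const d K -> K <= K' -> bmetric_const d K'.
Proof.
move=> d_ge0 [K_ge1 dK] le_KK'; split=> [|x y z]; first lra.
have := dK x y z; have := d_ge0 x y; have := d_ge0 y z; nra.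
Qed.

Lemma seq_common_witness (T : eqType) (P : T -> R -> Prop) (K0 : R) (l : seq T) :
  (forall i K K', P i K -> K <= K' -> P i K') -> (forall i, exists K, P i K) ->
  exists K, K0 <= K /\ forall i, i \in l -> P i K.
Proof.
move=> P_up P_ex; elim: l => [|a l [Kl [le_K0 PKl]]].
  by exists K0; split=> //; apply: Rle_refl.
have [Ka PKa] := P_ex a.
exists (Rmax Ka Kl); split=> [|i]; first exact: Rle_trans _ _ _ le_K0 (Rmax_r _ _).
rewrite in_cons => /orP [/eqP -> | il].
- exact: P_up PKa (Rmax_l _ _).
- exact: P_up (PKl i il) (Rmax_r _ _).
Qed.

Lemma fin_common_bmetric_const (I : finType) (X : I -> Type)
    (d : forall i, X i -> X i -> R) :
  (forall i, is_bmetric (d i)) -> exists K, 0 <= K /\ forall i, bmetric_const (d i) K.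
Proof.
move=> dB.
have [|i|K [K_ge0 dK]] := @seq_common_witness I (fun i => bmetric_const (d i)) 0 (enum I).
- by move=> i K K'; apply: bmetric_const_le; case: (dB i).
- by case: (dB i) => _ [_ []].
- by exists K; split=> // i; apply: dK; rewrite mem_enum.
Qed.

Section QuasiSubadditive.

Variables (n : nat) (F : ('I_n -> R) -> R) (s : R).
Hypothesis F_ge0 : maps_into_Rplus F.
Hypothesis F_mono : monotone F.
Hypothesis F_qsub : quasi_subadditive F s.

Let scale_ge0 (t : R) (u : 'I_n -> R) :
  0 <= t -> nonneg_vec u -> nonneg_vec (fun i => t * u i).
Proof. by move=> t_ge0 u_ge0 i; apply: Rmult_le_pos. Qed.

Lemma quasi_subadditive_scale_nat (m : nat) :
  exists c, forall u, nonneg_vec u -> F (fun i => INR m.+1 * u i) <= c * F u.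
Proof.
case: F_qsub => s_ge1 Fsub; elim: m => [|m [c Fc]].
  exists 1 => u _; rewrite (_ : (fun i => _) = u) /=; last first.
    by apply: functional_extensionality => i; rewrite Rmult_1_l.
  lra.
exists (s * (c + 1)) => u u_ge0.
rewrite (_ : (fun i => _) = (fun i => INR m.+1 * u i + u i)); last first.
  by apply: functional_extensionality => i; rewrite [INR m.+2]S_INR; lra.
apply: Rle_trans _ _ _ (Fsub _ _ (scale_ge0 (pos_INR m.+1) u_ge0) u_ge0) _.
have := Fc u u_ge0; have := F_ge0 u_ge0; nra.
Qed.

Lemma quasi_subadditive_scale (t : R) : 0 <= t ->
  exists c, forall u, nonneg_vec u -> F (fun i => t * u i) <= c * F u.
Proof.
move=> t_ge0; have [m lt_t_m] := INR_unbounded t.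
have [c Fc] := quasi_subadditive_scale_nat m.
exists c => u u_ge0; apply: Rle_trans _ _ _ _ (Fc u u_ge0).
apply: F_mono => [||i]; [exact: scale_ge0 | exact: scale_ge0 (pos_INR _) u_ge0 |].
by apply: Rmult_le_compat_r => //; rewrite S_INR; lra.
Qed.

Lemma quasi_subadditive_relaxed_triangle (K : R) : 0 <= K ->
  exists C, 1 <= C /\ forall u v w, nonneg_vec u -> nonneg_vec v -> nonneg_vec w ->
    (forall i, w i <= K * (u i + v i)) -> F w <= C * (F u + F v).
Proof.
case: F_qsub => s_ge1 Fsub K_ge0; have [c Fc] := quasi_subadditive_scale K_ge0.
exists (Rmax 1 (s * c)); split=> [|u v w u_ge0 v_ge0 w_ge0 le_w]; first exact: Rmax_l.
have Ku_ge0 := scale_ge0 K_ge0 u_ge0; have Kv_ge0 := scale_ge0 K_ge0 v_ge0.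
have Fw : F w <= F (fun i => K * u i + K * v i).
  apply: F_mono => // [i|i]; last by rewrite -Rmult_plus_distr_l.
  by have := Ku_ge0 i; have := Kv_ge0 i; lra.
have := Fsub _ _ Ku_ge0 Kv_ge0; have := Fc u u_ge0; have := Fc v v_ge0.
have := F_ge0 u_ge0; have := F_ge0 v_ge0; have := Rmax_r 1 (s * c); nra.
Qed.

End QuasiSubadditive.

Theorem proposition3p1 (n : nat) (F : ('I_n -> R) -> R) (s : R) :
  maps_into_Rplus F -> amenable F -> monotone F -> quasi_subadditive F s ->
  PnB F.
Proof.
move=> F_ge0 F_amen F_mono F_qsub X d dB.
have d_ge0 x y : nonneg_vec (fun i => d i (x i) (y i)) by move=> i; case: (dB i).
have d0 i a b : d i a b = 0 <-> a = b by case: (dB i) => _ [].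
have dC i a b : d i a b = d i b a by case: (dB i) => _ [_ []].
split; [|split; [|split]] => [x y|x y|x y|]; first exact: F_ge0.
- rewrite F_amen //; split=> [dxy0 | -> i]; last exact/d0.
  by apply: functional_extensionality_dep => i; apply/d0; exact: dxy0.
- by congr F; apply: functional_extensionality => i; exact: dC.
have [K [K_ge0 dK]] := fin_common_bmetric_const dB.
have [C [C_ge1 FC]] := quasi_subadditive_relaxed_triangle F_ge0 F_mono F_qsub K_ge0.
exists C; split=> // x y z; apply: FC => // i; exact: (proj2 (dK i)).
Qed.
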